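(* Let $n, r \geq 1$ and $q \geq 0$ be integers and let $\epsilon \in F(r,n)$ with $|\epsilon| = n$. Then \[(-1)^{n-r}\sum_{s_1, \ldots, s_r \geq 0} (-1)^{\sum_i s_i} \binom{n}{q - \sum_i s_i} \prod_{i=1}^r \left((s_i+1)^{\epsilon(i)} - s_i^{\epsilon(i)}\right) = (-1)^{n-q-r} \sum_{\substack{t \in F(r,q) \\ |t| = q}} \prod_{i=1}^r E(\epsilon(i), t(i)).\]
   Context: $F(r,k)$ denotes the set of functions $\epsilon: \{1,\ldots,r\} \to \{0,\ldots,k\}$, $|\epsilon| = \sum_i \epsilon(i)$. $E(m,j)$ is the Eulerian number (number of permutations of $\{1,\ldots,m\}$ with exactly $j$ descents) for $m \geq 1$, with $E(m,j) = 0$ if $m \leq 0$ or $j \notin\{0,\ldots,m-1\}$. Binomial coefficients $\binom{n}{j}$ vanish for $j<0$ or $j > n$, and $0^0 = 1$. *)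

From mathcomp Require Import all_boot all_order all_algebra all_fingroup.
Set Implicit Arguments. Unset Strict Implicit. Unset Printing Implicit Defensive.
Import GRing.Theory Num.Theory.
Local Open Scope ring_scope.

Definition descents (m : nat) (s : 'S_m) : nat :=
  #|[set p : 'I_m * 'I_m | (val p.2 == (val p.1).+1)%N && (s p.2 < s p.1)%N]|.

(* Eulerian number E(m,j); E(0,j) = 0 by the paper's convention. *)
Definition Eulerian (m j : nat) : nat :=
  if m == 0%N then 0%N else #|[set s : 'S_m | descents s == j]|.

(* Binomial coefficient with integer lower index, vanishing for k < 0
   (and for k > n, as 'C already does). *)
Definition binz (n : nat) (k : int) : int :=
  if (k < 0) then 0 else ('C(n, `|k|%N))%:Z.

From mathcomp Require Import all_boot all_order all_algebra all_fingroup.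
From mathcomp Require Import ring zify.
Import GRing.Theory Num.Theory.
Set Implicit Arguments. Unset Strict Implicit. Unset Printing Implicit Defensive.
Local Open Scope ring_scope.

(* Let A_m(x) = sum_{w in S_m} x^des(w) and S_m(x) = sum_{s >= 0} (s+1)^m x^s.
   Inserting the maximum m into each of the m+1 gaps of a permutation of
   size m creates a new descent in exactly m - des(w) of them, whence
   A_{m+1} = (1 + m x) A_m + (1 - x) x A_m'.  Since S_{m+1} = S_m + x S_m',
   the series (1 - x)^(m+1) S_m obeys the same recurrence, which gives
   Carlitz's identity (1 - x)^(m+1) S_m = A_m; we only need it modulo x^K,
   where S_m is a polynomial.  As sum_s ((s+1)^e - s^e) x^s = (1 - x) S_e,
   the left-hand side is, up to sign, the coefficient of x^q in
   (1 - x)^n prod_i sum_s ((s+1)^eps(i) - s^eps(i)) x^s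
     = prod_i (1 - x)^eps(i) sum_s ((s+1)^eps(i) - s^eps(i)) x^s
     = prod_i A_eps(i)(x)  (mod x^(q+1)),
   and that coefficient is the right-hand side. *)

Fixpoint des_from (x : nat) (l : seq nat) : nat :=
  if l is y :: l' then ((y < x) + des_from y l')%N else 0%N.

Definition des (l : seq nat) : nat := if l is x :: l' then des_from x l' else 0%N.

Lemma des_from_cat x l1 l2 :
  des_from x (l1 ++ l2) = (des_from x l1 + des_from (last x l1) l2)%N.
Proof. by elim: l1 x => //= y l1 IH x; rewrite IH addnA. Qed.

Lemma des_from_leq x l : (des_from x l <= size l)%N.
Proof. by elim: l x => //= y l IH x; have := IH y; case: (y < x)%N; lia. Qed.

Lemma des_leq l : (des l <= (size l).-1)%N.
Proof. by case: l => //= x l; apply: des_from_leq. Qed.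

Definition cut_descent (l1 l2 : seq nat) : bool :=
  if l1 is x :: t then (if l2 is y :: _ then (y < last x t)%N else false) else false.

Lemma des_cat l1 l2 : des (l1 ++ l2) = (des l1 + cut_descent l1 l2 + des l2)%N.
Proof.
case: l1 => [|x t]; case: l2 => [|y u] //=; rewrite ?cats0 ?add0n ?addn0 //.
by rewrite des_from_cat /= addnA.
Qed.

Definition new_descent (l : seq nat) (p : nat) : bool :=
  (drop p l != [::]) && ~~ cut_descent (take p l) (drop p l).

Lemma des_insert_max m l1 l2 : all (fun x => x < m)%N (l1 ++ l2) ->
  des (l1 ++ m :: l2) = (des (l1 ++ l2) + ((l2 != [::]) && ~~ cut_descent l1 l2))%N.
Proof.
move=> /allP lt_m; rewrite !des_cat.
have -> : cut_descent l1 (m :: l2) = false.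
  case: l1 lt_m => [|x t] //= lt_m.
  by rewrite ltnNge ltnW // lt_m // -cat_cons mem_cat mem_last.
case: l2 lt_m => [|y u] lt_m /=; first by clear lt_m; case: l1 => //= x t; rewrite !addn0.
have -> : (y < m)%N by apply: lt_m; rewrite mem_cat mem_head orbT.
by case: (cut_descent l1 _); lia.
Qed.

Lemma sum_new_descent_from x l :
  (\sum_(p < (size l).+1)
     ((drop p l != [::]) && ~~ cut_descent (x :: take p l) (drop p l)))%N
  = (size l - des_from x l)%N.
Proof.
elim: l x => [|y l IH] x; first by rewrite big_ord1.
rewrite big_ord_recl (eq_bigr (fun p : 'I_(size l).+1 =>
  nat_of_bool ((drop p l != [::]) && ~~ cut_descent (y :: take p l) (drop p l)))) // IH /=.
by have := des_from_leq y l; case: (y < x)%N; lia.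
Qed.

Lemma sum_new_descent l : (\sum_(p < (size l).+1) new_descent l p)%N = (size l - des l)%N.
Proof.
case: l => [|x l]; first by rewrite big_ord1.
rewrite big_ord_recl (eq_bigr (fun p : 'I_(size l).+1 =>
  nat_of_bool ((drop p l != [::]) && ~~ cut_descent (x :: take p l) (drop p l)))) //.
by rewrite sum_new_descent_from /=; have := des_from_leq x l; lia.
Qed.

Definition perm_nat m (s : 'S_m) (i : nat) : nat := oapp (fun j => val (s j)) 0%N (insub i).

Lemma perm_natE m (s : 'S_m) (j : 'I_m) : perm_nat s j = s j.
Proof. by rewrite /perm_nat valK. Qed.

Lemma descentsE m (s : 'S_m) :
  descents s = (\sum_(0 <= i < m.-1) (perm_nat s i.+1 < perm_nat s i))%N.
Proof.
case: m s => [|k] s; first by rewrite big_geq // /descents; apply: eq_card0 => -[[]].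
pose f i : 'I_k.+1 * 'I_k.+1 := (widen_ord (leqnSn k) i, lift ord0 i).
have f_inj : injective f by move=> i j [/val_inj].
rewrite /descents (_ : [set p | _] = f @: [set i | (s (lift ord0 i) < s (f i).1)%N]).
  rewrite card_imset // -sum1dep_card big_mkcond big_mkord /=.
  apply: eq_bigr => i _; rewrite -(lift0 i) perm_natE.
  by rewrite -[nat_of_ord i]/(val (f i).1) perm_natE; case: ifP.
apply/setP => -[a b]; rewrite inE /=; apply/andP/imsetP => [[/eqP b_def lt_ba]|[i]].
  have lt_ak : (a < k)%N by rewrite -ltnS -b_def.
  have ea : widen_ord (leqnSn k) (Ordinal lt_ak) = a by apply: val_inj.
  have eb : lift ord0 (Ordinal lt_ak) = b by apply: val_inj; rewrite /= b_def.
  by exists (Ordinal lt_ak); rewrite /f ?inE /= ea eb.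
by rewrite inE => lt_i [-> ->]; rewrite lift0.
Qed.

Lemma des_from_map_iota (f : nat -> nat) a n :
  des_from (f a) (map f (iota a.+1 n)) = (\sum_(a <= i < a + n) (f i.+1 < f i))%N.
Proof.
elim: n a => [|n IH] a; first by rewrite addn0 big_geq.
by rewrite /= IH (big_ltn (m := a)) ?addnS ?ltnS ?leq_addr.
Qed.

Lemma des_map_iota (f : nat -> nat) n :
  des (map f (iota 0 n)) = (\sum_(0 <= i < n.-1) (f i.+1 < f i))%N.
Proof. by case: n => [|n]; [rewrite big_geq | exact: des_from_map_iota f 0 n]. Qed.

Definition perm_seq m (s : 'S_m) : seq nat := map (perm_nat s) (iota 0 m).

Lemma size_perm_seq m (s : 'S_m) : size (perm_seq s) = m.
Proof. by rewrite size_map size_iota. Qed.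

Lemma perm_seq_lt m (s : 'S_m) : all (fun x => x < m)%N (perm_seq s).
Proof.
apply/allP => x /mapP[i]; rewrite mem_iota => /andP[_ lt_im] ->.
by rewrite -[i]/(val (Ordinal lt_im)) perm_natE.
Qed.

Lemma descents_perm_seq m (s : 'S_m) : descents s = des (perm_seq s).
Proof. by rewrite descentsE des_map_iota. Qed.

Lemma descents_leq m (s : 'S_m) : (descents s <= m.-1)%N.
Proof. by rewrite descents_perm_seq -{2}(size_perm_seq s) des_leq. Qed.

Definition insert_max m (x : 'S_m * 'I_m.+1) : 'S_m.+1 := lift_perm x.2 ord_max x.1.

Lemma insert_max_bij m : bijective (@insert_max m).
Proof.
apply: inj_card_bij; last by rewrite card_prod !card_Sn card_ord factS mulnC.
move=> [w p] [w' p'] /= eq_ins; rewrite /insert_max /= in eq_ins.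
have eq_p : p = p'.
  by apply: (@perm_inj _ (lift_perm p' ord_max w')); rewrite lift_perm_id -eq_ins lift_perm_id.
subst p'; congr (_, _); apply/permP => k.
by apply: (@lift_inj _ ord_max); rewrite -!(lift_perm_lift p) eq_ins.
Qed.

Lemma perm_nat_insert_max m (w : 'S_m) (p : 'I_m.+1) i : (i < m)%N ->
  perm_nat (insert_max (w, p)) (bump p i) = perm_nat w i.
Proof.
move=> lt_im; rewrite -[bump p i]/(val (lift p (Ordinal lt_im))) -[i]/(val (Ordinal lt_im)).
by rewrite !perm_natE lift_perm_lift /= /bump leqNgt ltn_ord.
Qed.

Lemma perm_seq_insert_max m (w : 'S_m) (p : 'I_m.+1) :
  perm_seq (insert_max (w, p)) = take p (perm_seq w) ++ m :: drop p (perm_seq w).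
Proof.
have le_pm : (p <= m)%N by rewrite -ltnS.
have split_iota : iota 0 m.+1 = iota 0 p ++ (p : nat) :: iota p.+1 (m - p).
  by rewrite -[_ :: _]/(iota p (m - p).+1) -iotaD; congr iota; lia.
rewrite /perm_seq -map_take -map_drop take_iota drop_iota (minn_idPl le_pm) split_iota.
rewrite map_cat /= perm_natE lift_perm_id add0n -[(p : nat).+1]add1n iotaDl -map_comp.
congr (_ ++ _ :: _).
  apply/eq_in_map => i; rewrite mem_iota add0n => /andP[_ lt_ip].
  by rewrite -(perm_nat_insert_max w p) ?(leq_trans lt_ip) // /bump leqNgt lt_ip.
apply/eq_in_map => i; rewrite mem_iota subnKC // => /andP[le_pi lt_im] /=.
by rewrite -(perm_nat_insert_max w p) // /bump le_pi.
Qed.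

Lemma descents_insert_max m (w : 'S_m) (p : 'I_m.+1) :
  descents (insert_max (w, p)) = (descents w + new_descent (perm_seq w) p)%N.
Proof.
by rewrite !descents_perm_seq perm_seq_insert_max des_insert_max cat_take_drop ?perm_seq_lt.
Qed.

Section TruncatedPolynomials.
Variable R : comNzRingType.
Implicit Types (p q : {poly R}) (K : nat).

Definition eqmodX K p q := exists g, p = q + 'X^K * g.

Lemma eqmodX_refl K p : eqmodX K p p.
Proof. by exists 0; rewrite mulr0 addr0. Qed.

Lemma eqmodX_trans K p q r : eqmodX K p q -> eqmodX K q r -> eqmodX K p r.
Proof. by move=> [g ->] [h ->]; exists (h + g); rewrite mulrDr addrA. Qed.

Lemma eqmodXM K p p' q q' :
  eqmodX K p p' -> eqmodX K q q' -> eqmodX K (p * q) (p' * q').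
Proof. by move=> [g ->] [h ->]; exists (g * q' + p' * h + 'X^K * g * h); ring. Qed.

Lemma eqmodX_prod r K (p q : 'I_r -> {poly R}) :
  (forall i, eqmodX K (p i) (q i)) -> eqmodX K (\prod_i p i) (\prod_i q i).
Proof.
move=> eq_pq; apply: (big_rec2 (eqmodX K)); first exact: eqmodX_refl.
by move=> i p1 q1 _; apply: eqmodXM.
Qed.

Lemma coef_eqmodX K p q k : eqmodX K p q -> (k < K)%N -> p`_k = q`_k.
Proof. by move=> [g ->] lt_kK; rewrite coefD coefXnM lt_kK addr0. Qed.

Lemma eqmodX_take_poly K p : eqmodX K p (\sum_(j < K) p`_j *: 'X^j).
Proof.
exists (drop_poly K p).
by rewrite -{1}(poly_take_drop K p) /take_poly poly_def mulrC.
Qed.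

Lemma coef_one_subX_exp n k : ((1 - 'X) ^+ n : {poly R})`_k = (-1) ^+ k * 'C(n, k)%:R.
Proof.
elim: n k => [|n IH] k.
  by rewrite expr0 coef1 bin0n; case: k => [|k] /=; rewrite ?mul1r ?mulr0.
rewrite exprS mulrBl mul1r coefB coefXM IH.
case: k => [|k] /=; first by rewrite !bin0 subr0.
by rewrite IH binS natrD exprS; ring.
Qed.

Lemma coef_mul_prod_sum r K (F : 'I_r -> 'I_K -> R) p k :
  (p * \prod_i \sum_(j < K) F i j *: 'X^j)`_k =
  \sum_(f : {ffun 'I_r -> 'I_K}) (\prod_i F i (f i)) *
     (if (k < \sum_i (f i : nat))%N then 0 else p`_(k - \sum_i (f i : nat))).
Proof.
rewrite bigA_distr_bigA /= mulr_sumr coef_sum; apply: eq_bigr => f _.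
have -> : \prod_i (F i (f i) *: 'X^(f i)) = (\prod_i F i (f i)) *: 'X^(\sum_i (f i : nat)).
  rewrite -prodrXr -mul_polyC rmorph_prod -big_split /=.
  by apply: eq_bigr => i _; rewrite mul_polyC.
by rewrite -scalerAr coefZ coefMXn.
Qed.

Lemma coef_prod r (p : 'I_r -> {poly R}) k :
  (\prod_i p i)`_k = \sum_(t : {ffun 'I_r -> 'I_k.+1} | (\sum_i (t i : nat))%N == k)
                        \prod_i (p i)`_(t i).
Proof.
rewrite (coef_eqmodX (eqmodX_prod (fun i => eqmodX_take_poly k.+1 (p i)))) //.
rewrite -[\prod_i _]mul1r coef_mul_prod_sum [RHS]big_mkcond /=.
apply: eq_bigr => t _; rewrite coef1 subn_eq0 eqn_leq.
case: (ltnP k (\sum_i (t i : nat))) => _ /=; first by rewrite mulr0.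
by case: (k <= _)%N; rewrite ?mulr1 ?mulr0.
Qed.

Lemma mulX_derivXn n : 'X * ('X^n)^`() = 'X^n *+ n :> {poly R}.
Proof. by case: n => [|n]; rewrite derivXn ?mulr0n ?mulr0 // mulrnAr -exprS. Qed.

End TruncatedPolynomials.

Definition descent_poly m : {poly int} := \sum_(s : 'S_m) 'X^(descents s).

Definition eulerian_step m (f : {poly int}) : {poly int} :=
  (1 + m%:R * 'X) * f + (1 - 'X) * ('X * f^`()).

Lemma eulerian_step_Xn m d (b : 'I_m.+1 -> bool) :
  (d <= m)%N -> (\sum_p b p)%N = (m - d)%N -> \sum_p 'X^(d + b p) = eulerian_step m 'X^d.
Proof.
move=> le_dm sum_b.
have Xb p : 'X^(d + b p) = 'X^d + (b p)%:R * ('X^d * ('X - 1)) :> {poly int}.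
  by case: (b p); rewrite ?addn0 ?mul0r ?addr0 // addn1 exprS mul1r; ring.
rewrite (eq_bigr _ (fun p _ => Xb p)) big_split /= sumr_const card_ord -mulr_suml.
rewrite -natr_sum sum_b natrB //.
by rewrite /eulerian_step mulX_derivXn; ring.
Qed.

Lemma descent_poly_rec m : descent_poly m.+1 = eulerian_step m (descent_poly m).
Proof.
rewrite /descent_poly (reindex (@insert_max m)) /=; last exact/onW_bij/insert_max_bij.
rewrite (eq_bigr (fun x : 'S_m * 'I_m.+1 =>
  'X^(descents x.1 + new_descent (perm_seq x.1) x.2))); last first.
  by move=> [w p] _; rewrite descents_insert_max.
rewrite -(pair_bigA _ (fun (w : 'S_m) (p : 'I_m.+1) =>
  'X^(descents w + new_descent (perm_seq w) p))) /=.
have step_sum F : eulerian_step m (\sum_(w : 'S_m) F w) = \sum_w eulerian_step m (F w).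
  by rewrite /eulerian_step raddf_sum !mulr_sumr -big_split.
rewrite step_sum; apply: eq_bigr => w _; apply: eulerian_step_Xn.
  exact: leq_trans (descents_leq w) (leq_pred m).
by have := sum_new_descent (perm_seq w); rewrite size_perm_seq -descents_perm_seq.
Qed.

Lemma descent_poly0 : descent_poly 0 = 1.
Proof.
rewrite /descent_poly (eq_bigr (fun _ => 1)) ?sumr_const ?card_Sn // => s _.
by move: (descents_leq s); rewrite leqn0 => /eqP->.
Qed.

Definition power_sum_poly K m : {poly int} := \sum_(s < K) ((s.+1)%:Z ^+ m) *: 'X^s.

Lemma power_sum_polyS K m :
  power_sum_poly K m.+1 = power_sum_poly K m + 'X * (power_sum_poly K m)^`().
Proof.
rewrite /power_sum_poly raddf_sum mulr_sumr -big_split; apply: eq_bigr => s _ /=.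
rewrite derivZ -scalerAr mulX_derivXn -scalerMnr scalerMnl -scalerDl exprS.
by congr (_ *: _); rewrite -[(s.+1)%:Z]natz; ring.
Qed.

Lemma power_sum_poly_step K m :
  (1 - 'X) ^+ m.+2 * power_sum_poly K m.+1 =
  eulerian_step m ((1 - 'X) ^+ m.+1 * power_sum_poly K m).
Proof.
rewrite power_sum_polyS /eulerian_step derivM deriv_exp derivB derivC derivX sub0r /= !exprS.
ring.
Qed.

Lemma eulerian_step_eqmodX K m f g :
  eqmodX K f g -> eqmodX K (eulerian_step m f) (eulerian_step m g).
Proof.
move=> [h ->]; exists ((1 + m%:R * 'X) * h + (1 - 'X) * (h *+ K + 'X * h^`())).
rewrite /eulerian_step derivD derivM !mulrDr [_ * (('X^K)^`() * h)]mulrA mulX_derivXn.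
ring.
Qed.

Lemma power_sum_poly_eqmodX K m :
  eqmodX K ((1 - 'X) ^+ m.+1 * power_sum_poly K m) (descent_poly m).
Proof.
elim: m => [|m IH]; last first.
  by rewrite power_sum_poly_step descent_poly_rec; apply: eulerian_step_eqmodX.
exists (-1); rewrite descent_poly0 /power_sum_poly expr1.
have geom := subrXX (1 : {poly int}) 'X K.
rewrite expr1n (eq_bigr (fun i : 'I_K => 'X^i)) in geom; last first.
  by move=> i _; rewrite expr1n mul1r.
under eq_bigr do rewrite expr0 scale1r.
by rewrite -geom mulrN1.
Qed.

Definition power_diff_poly K e : {poly int} :=
  \sum_(s < K) ((s.+1)%:Z ^+ e - (s : nat)%:Z ^+ e) *: 'X^s.

Lemma power_diff_poly_eqmodX K e :
  eqmodX K (power_diff_poly K e.+1) ((1 - 'X) * power_sum_poly K e.+1).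
Proof.
rewrite /power_diff_poly /power_sum_poly; case: K => [|k].
  by rewrite !big_ord0 mulr0; apply: eqmodX_refl.
exists (((k.+1)%:Z ^+ e.+1)%:P).
under eq_bigr do rewrite scalerBl.
rewrite sumrB [X in _ - X]big_ord_recl /= exprS mul0r scale0r add0r.
rewrite [X in _ - X](eq_bigr (fun i : 'I_k => 'X * (((i.+1)%:Z ^+ e.+1) *: 'X^i))); last first.
  by move=> i _; rewrite -scalerAr -exprS.
by rewrite -mulr_sumr big_ord_recr /= (exprS 'X) -!mul_polyC; ring.
Qed.

(* [0] rather than [descent_poly 0 = 1], following the convention E(0, j) = 0. *)
Definition eulerian_poly e : {poly int} := if e is 0 then 0 else descent_poly e.

Lemma coef_eulerian_poly e j : (eulerian_poly e)`_j = (Eulerian e j)%:Z.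
Proof.
case: e => [|e]; first by rewrite coef0.
rewrite /= /descent_poly coef_sum /Eulerian /= -sum1_card -natz natr_sum [RHS]big_mkcond /=.
by apply: eq_bigr => s _; rewrite coefXn inE eq_sym; case: (_ == _).
Qed.

Lemma eulerian_poly_eqmodX K e :
  eqmodX K ((1 - 'X) ^+ e * power_diff_poly K e) (eulerian_poly e).
Proof.
case: e => [|e].
  rewrite /power_diff_poly big1 ?mulr0 => [|s _]; first exact: eqmodX_refl.
  by rewrite !expr0 subrr scale0r.
apply: eqmodX_trans (power_sum_poly_eqmodX K e.+1).
rewrite [(1 - 'X) ^+ e.+2]exprSr -mulrA.
exact: eqmodXM (eqmodX_refl _ _) (power_diff_poly_eqmodX K e).
Qed.

Lemma signed_binz n q a :
  (-1) ^+ a * binz n (q%:Z - a%:Z) =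
  (-1) ^+ q * (if (q < a)%N then 0 else ((1 - 'X) ^+ n : {poly int})`_(q - a)).
Proof.
rewrite /binz; case: ltnP => [lt_qa|le_aq].
  by rewrite subr_lt0 ltz_nat lt_qa !mulr0.
have sign_sq : (-1) ^+ (q - a) * (-1) ^+ (q - a) = 1 :> int.
  by rewrite -expr2 -exprM mulnC exprM sqrrN !expr1n.
have -> : (-1) ^+ q = (-1) ^+ a * (-1) ^+ (q - a) :> int by rewrite -exprD subnKC.
rewrite subzn // ltz_nat ltn0 absz_nat coef_one_subX_exp natz.
by rewrite -mulrA [X in _ = _ * X]mulrA sign_sq mul1r.
Qed.

Lemma sum_signed_binz_power_diff n q r K (e : 'I_r -> nat) :
  \sum_(s : {ffun 'I_r -> 'I_K})
     ((-1) ^+ (\sum_i (s i : nat)) * binz n (q%:Z - (\sum_i (s i : nat))%:Z)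
      * \prod_i (((s i).+1)%:Z ^+ e i - (s i : nat)%:Z ^+ e i))
  = (-1) ^+ q * ((1 - 'X) ^+ n * \prod_i power_diff_poly K (e i))`_q.
Proof.
rewrite coef_mul_prod_sum mulr_sumr; apply: eq_bigr => s _.
by rewrite mulrCA -signed_binz; ring.
Qed.

Theorem proposition3p6 (n r q : nat) (hn : (1 <= n)%N) (hr : (1 <= r)%N)
  (eps : {ffun 'I_r -> 'I_n.+1})
  (heps : (\sum_(i < r) (eps i : nat))%N = n)
  (N : nat) (hN : (q <= N)%N) :
  (-1 : int) ^ (n%:Z - r%:Z) *
    \sum_(s : {ffun 'I_r -> 'I_N.+1})
       ((-1) ^+ (\sum_(i < r) (s i : nat))%N
        * binz n (q%:Z - (\sum_(i < r) (s i : nat))%N%:Z)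
        * \prod_(i < r) (((s i).+1)%:Z ^+ (eps i) - (s i : nat)%:Z ^+ (eps i)))
  = (-1 : int) ^ (n%:Z - q%:Z - r%:Z) *
    \sum_(t : {ffun 'I_r -> 'I_q.+1} | (\sum_(i < r) (t i : nat))%N == q)
       \prod_(i < r) (Eulerian (eps i) (t i))%:Z.
Proof.
rewrite (sum_signed_binz_power_diff n q N.+1 (fun i => nat_of_ord (eps i))).
have -> : (1 - 'X) ^+ n * \prod_i power_diff_poly N.+1 (eps i) =
          \prod_i ((1 - 'X) ^+ eps i * power_diff_poly N.+1 (eps i)).
  by rewrite big_split /= prodrXr heps.
rewrite (coef_eqmodX (eqmodX_prod (fun i => eulerian_poly_eqmodX N.+1 (eps i)))) // coef_prod.
under [in RHS]eq_bigr do under eq_bigr do rewrite -coef_eulerian_poly.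
have sign : (-1 : int) ^ (n%:Z - q%:Z - r%:Z) = (-1) ^ (n%:Z - r%:Z) * (-1) ^+ q.
  rewrite (_ : n%:Z - q%:Z - r%:Z = (n%:Z - r%:Z) + (- q%:Z)); last by ring.
  by rewrite exprzDr ?unitrN1 // -exprz_inv invrN1.
by rewrite sign -mulrA.
Qed.
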